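(* Let $\mathcal{Y}$ be a finite set of labels and let $\Omega$ be a countable set of model parameters (ensemble members) equipped with a probability distribution $p(\omega \mid \mathcal{D})$. For each $\omega \in \Omega$ and input $x$, let $p(y \mid x, \omega)$ be a probability distribution on $\mathcal{Y}$. Let $x_1, x_2$ be two inputs with corresponding label random variables $Y_1, Y_2$, and let $\delta \ge 0$ and $\epsilon \ge 0$. Suppose that $$I(Y_1; \omega \mid x_1, \mathcal{D}) > I(Y_2; \omega \mid x_2, \mathcal{D}) + \delta$$ and $$\left| H(Y_1 \mid x_1, \mathcal{D}) - H(Y_2 \mid x_2, \mathcal{D}) \right| \le \epsilon .$$ Then there exists a set $\Omega' \subseteq \Omega$ with $p(\Omega' \mid \mathcal{D}) > 0$ such that for every $\omega' \in \Omega'$, $$H(Y_1 \mid x_1, \omega') < H(Y_2 \mid x_2, \omega') - (\delta - \epsilon).$$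
   Context: The predictive distribution of the ensemble is $p(y \mid x, \mathcal{D}) = \mathbb{E}_{p(\omega \mid \mathcal{D})}[p(y \mid x, \omega)]$. $H(Y \mid x, \mathcal{D})$ denotes the Shannon entropy of $p(\cdot \mid x, \mathcal{D})$ (predictive entropy), and $H(Y \mid x, \omega)$ denotes the Shannon entropy of $p(\cdot \mid x, \omega)$ (softmax entropy of ensemble member $\omega$). The mutual information (epistemic uncertainty) is $I(Y; \omega \mid x, \mathcal{D}) = H(Y \mid x, \mathcal{D}) - \mathbb{E}_{p(\omega \mid \mathcal{D})}[H(Y \mid x, \omega)]$. *)

From HB Require Import structures.
From mathcomp Require Import all_boot all_order all_algebra.
From mathcomp Require Import all_classical all_reals all_analysis.
Set Implicit Arguments. Unset Strict Implicit. Unset Printing Implicit Defensive.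
Import Order.TTheory GRing.Theory Num.Theory.
Local Open Scope ring_scope.
Local Open Scope classical_set_scope.

(* Shannon entropy (natural log) of a distribution q on the finite label set;
   convention 0 * ln 0 = 0 holds automatically since the summand has factor q y. *)
Definition entropy (R : realType) (Y : finType) (q : Y -> R) : R :=
  - \sum_(y : Y) q y * ln (q y).

Definition is_distr (R : realType) (Y : finType) (q : Y -> R) : Prop :=
  (forall y, 0 <= q y) /\ \sum_(y : Y) q y = 1.

Definition is_cdistr (R : realType) (Omega : countType) (w : Omega -> R) : Prop :=
  (forall o, 0 <= w o) /\ (\esum_(o in [set: Omega]) (w o)%:E = 1%E).

Definition prob_of (R : realType) (Omega : countType) (w : Omega -> R)
  (A : set Omega) : \bar R := \esum_(o in A) (w o)%:E.

Definition predictive (R : realType) (Omega : countType) (Y : finType)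
  (w : Omega -> R) (px : Omega -> Y -> R) (y : Y) : R :=
  fine (\esum_(o in [set: Omega]) (w o * px o y)%:E).

Definition expected_entropy (R : realType) (Omega : countType) (Y : finType)
  (w : Omega -> R) (px : Omega -> Y -> R) : R :=
  fine (\esum_(o in [set: Omega]) (w o * entropy (px o))%:E).

(* I(Y; omega | x, D) = H(Y | x, D) - E_w[H(Y | x, omega)] *)
Definition mutual_info (R : realType) (Omega : countType) (Y : finType)
  (w : Omega -> R) (px : Omega -> Y -> R) : R :=
  entropy (predictive w px) - expected_entropy w px.

From HB Require Import structures.
From mathcomp Require Import all_boot all_order all_algebra.
From mathcomp Require Import all_classical all_reals all_analysis.
From mathcomp Require Import lra.
Set Implicit Arguments. Unset Strict Implicit.
Import Order.TTheory GRing.Theory Num.Theory.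
Local Open Scope ring_scope.
Local Open Scope classical_set_scope.

(* The mutual information exceeds [delta] only if the member entropies differ
   on average by more than [delta - eps], because the predictive entropies are
   [eps]-close. An average gap of a bounded function under a countable
   distribution cannot come from a null set, so the members where the gap
   exceeds [delta - eps] carry positive mass. *)

Lemma esumZl (R : realType) (T : choiceType) (D : set T) (k : R) (a : T -> R) :
  0 <= k -> \esum_(i in D) (k * a i)%:E = (k%:E * \esum_(i in D) (a i)%:E)%E.
Proof.
move=> k0; rewrite /esum -ereal_supZl //; last first.
  by apply/set0P; exists 0%E; exists set0; [exact: fsets_set0|rewrite fsbig_set0].
rewrite image_comp; congr ereal_sup; apply: eq_imagel => A [finA _] /=.
by rewrite !fsumEFin // -EFinM !fsbig_finite //= mulr_sumr.
Qed.

Definition mean (R : realType) (Omega : countType) (w h : Omega -> R) : R :=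
  fine (\esum_(o in [set: Omega]) (w o * h o)%:E).

Lemma prob_of_eq0 (R : realType) (Omega : countType) (w : Omega -> R)
    (A : set Omega) :
  (forall o, 0 <= w o) -> prob_of w A = 0%E -> forall o, A o -> w o = 0.
Proof.
move=> w0 PA0 o Ao; apply/eqP; rewrite eq_le w0 andbT -lee_fin.
apply: (@le_trans _ _ (prob_of w A)); last by rewrite PA0.
apply: esum_ge; exists [set o]; first by split; [exact: finite_set1|move=> ? ->].
by rewrite fsbig_set1.
Qed.

Section Mean.
Variables (R : realType) (Omega : countType) (w : Omega -> R).
Hypothesis wd : is_cdistr w.

Lemma esum_mean (h : Omega -> R) (K : R) : (forall o, 0 <= h o <= K) ->
  \esum_(o in [set: Omega]) (w o * h o)%:E = (mean w h)%:E.
Proof.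
case: wd => w0 w1 hK; rewrite fineK // ge0_fin_numE; last first.
  by apply: esum_ge0 => o _; rewrite lee_fin mulr_ge0 //; case/andP: (hK o).
have M0 : 0 <= Num.max K 0 by rewrite le_max lexx orbT.
apply: (@le_lt_trans _ _ (Num.max K 0)%:E); last exact: ltry.
rewrite -[leRHS]mule1 -w1 -esumZl //; apply: le_esum => o _.
rewrite lee_fin mulrC ler_wpM2r //; case/andP: (hK o) => _ hoK.
by rewrite le_max hoK.
Qed.

Lemma mean_addr (h : Omega -> R) (K k : R) : (forall o, 0 <= h o <= K) ->
  0 <= k -> mean w (fun o => h o + k) = mean w h + k.
Proof.
move=> hK k0; have [w0 w1] := wd.
have hkK o : 0 <= h o + k <= K + k.
  by case/andP: (hK o) => ho hoK; rewrite addr_ge0 ?lerD2r.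
apply/EFin_inj; rewrite -(esum_mean hkK) EFinD -(esum_mean hK).
under eq_esum do rewrite mulrDr EFinD [w _ * k]mulrC.
rewrite esumD => [|o _|o _].
- by rewrite esumZl // w1 mule1.
- by rewrite lee_fin mulr_ge0 //; case/andP: (hK o).
- by rewrite lee_fin mulr_ge0.
Qed.

Lemma le_mean (f g : Omega -> R) (K : R) :
  (forall o, 0 <= f o <= K) -> (forall o, 0 <= g o <= K) ->
  (forall o, 0 < w o -> f o <= g o) -> mean w f <= mean w g.
Proof.
move=> fK gK fg; have [w0 _] := wd.
rewrite -lee_fin -(esum_mean fK) -(esum_mean gK); apply: le_esum => o _.
rewrite lee_fin; have [wo0|wo_gt0] := eqVneq (w o) 0; first by rewrite wo0 !mul0r.
by rewrite ler_wpM2l // fg // lt_def wo_gt0 w0.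
Qed.

(* [c] may be negative: adding [`|c| - c] to [g] and [`|c|] to [f] keeps both
   nonnegative, which [mean_addr] needs. *)
Lemma le_mean_shift (f g : Omega -> R) (K c : R) :
  (forall o, 0 <= f o <= K) -> (forall o, 0 <= g o <= K) ->
  (forall o, 0 < w o -> g o - c <= f o) -> mean w g - c <= mean w f.
Proof.
move=> fK gK gcf; have c_le := ler_norm c.
have Nc_le : - c <= `|c| by rewrite -normrN ler_norm.
have nc0 : 0 <= `|c| - c by rewrite subr_ge0.
have shiftK h k : (forall o, 0 <= h o <= K) -> 0 <= k <= 2 * `|c| ->
    forall o, 0 <= h o + k <= K + 2 * `|c|.
  by move=> hK /andP[k0 k2c] o; case/andP: (hK o) => h0 hoK; apply/andP; split; lra.
suff : mean w g + (`|c| - c) <= mean w f + `|c| by lra.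
rewrite -(mean_addr gK nc0) -(mean_addr fK (normr_ge0 c)).
apply: (@le_mean _ _ (K + 2 * `|c|)) => [||o /gcf]; last by lra.
- by apply: shiftK => //; lra.
- by apply: shiftK => //; lra.
Qed.

Lemma mean_gap_prob_gt0 (f g : Omega -> R) (K c : R) :
  (forall o, 0 <= f o <= K) -> (forall o, 0 <= g o <= K) ->
  mean w f + c < mean w g -> (0 < prob_of w [set o | (f o < g o - c)%R])%E.
Proof.
move=> fK gK gap; have [w0 _] := wd.
rewrite lt_def esum_ge0 ?andbT => [|o _]; last by rewrite lee_fin.
apply/eqP => /(prob_of_eq0 w0) null.
suff : mean w g - c <= mean w f by lra.
apply: (le_mean_shift fK gK) => o wo_gt0; rewrite leNgt; apply/negP => fgc.
by move: wo_gt0; rewrite (null o fgc) ltxx.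
Qed.

End Mean.

Lemma xlnx_le0 (R : realType) (q : R) : 0 <= q <= 1 -> q * ln q <= 0.
Proof. by case/andP=> q0 q1; rewrite mulr_ge0_le0 // ln_le0. Qed.

Lemma xlnx_ge_N1 (R : realType) (q : R) : 0 <= q -> -1 <= q * ln q.
Proof.
rewrite le_eqVlt => /predU1P[<-|q_gt0]; first by rewrite mul0r lerN10.
have /ln_sublinear : 0 < q^-1 by rewrite invr_gt0.
rewrite lnV ?posrE // => /ltW.
by rewrite -(ler_pM2l q_gt0) mulfV ?gt_eqF // mulrN lerNl.
Qed.

Lemma entropy_ge0 (R : realType) (Y : finType) (q : Y -> R) :
  is_distr q -> 0 <= entropy q.
Proof.
case=> q0 q1; rewrite /entropy oppr_ge0; apply: sumr_le0 => y _.
rewrite xlnx_le0 // q0 -q1 (bigD1 y) //= lerDl; exact: sumr_ge0.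
Qed.

Lemma entropy_le_card (R : realType) (Y : finType) (q : Y -> R) :
  (forall y, 0 <= q y) -> entropy q <= #|Y|%:R.
Proof.
move=> q0; rewrite /entropy -sumrN -sumr_const.
by apply: ler_sum => y _; rewrite lerNl xlnx_ge_N1.
Qed.

Lemma entropy_bounds (R : realType) (Y : finType) (q : Y -> R) :
  is_distr q -> 0 <= entropy q <= #|Y|%:R.
Proof. by move=> qd; rewrite entropy_ge0 // entropy_le_card //; case: qd. Qed.

Theorem mainTheorem1 (R : realType) (Y : finType) (Omega : countType) (X : Type)
  (w : Omega -> R) (p : X -> Omega -> Y -> R) (x1 x2 : X) (delta eps : R) :
  is_cdistr w ->
  (forall x o, is_distr (p x o)) ->
  0 <= delta -> 0 <= eps ->
  mutual_info w (p x1) > mutual_info w (p x2) + delta ->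
  `| entropy (predictive w (p x1)) - entropy (predictive w (p x2)) | <= eps ->
  exists Omega' : set Omega,
    (0 < prob_of w Omega')%E /\
    forall o, Omega' o ->
      entropy (p x1 o) < entropy (p x2 o) - (delta - eps).
Proof.
move=> wd pd _ _ gap_I /ler_normlP[close_H1 close_H2].
exists [set o | entropy (p x1 o) < entropy (p x2 o) - (delta - eps)]; split=> //.
have bounds x o : 0 <= entropy (p x o) <= #|Y|%:R by exact: entropy_bounds.
apply: (mean_gap_prob_gt0 wd (bounds x1) (bounds x2)).
by move: gap_I; rewrite /mutual_info /expected_entropy -!/(mean _ _); lra.
Qed.
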